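(* Let $A,B$ be unital Banach algebras, where $A$ is a zero product determined Banach algebra and $B$ is Dedekind-finite. Let $\varphi,\psi:A\to B$ be bounded linear maps such that $\varphi(a)\psi(b)=0$ whenever $a,b\in A$ satisfy $ab=0$, and suppose that both $\varphi(A)$ and $\psi(A)$ contain invertible elements of $B$. Then: (1) $\varphi$ and $\psi$ map invertible elements to invertible elements; (2) $\ker\varphi=\ker\psi$, and this set is a two-sided ideal of $A$; (3) $\varphi$ is surjective if and only if $\psi$ is surjective.
   Context: A Banach algebra $A$ is zero product determined (as a Banach algebra) if for every Banach space $X$ and every bounded bilinear $V:A\times A\to X$ with $V(a,b)=0$ whenever $ab=0$, there is a bounded linear $T:A\to X$ with $V(a,b)=T(ab)$ for all $a,b\in A$. A unital algebra is Dedekind-finite if every one-sided invertible element is invertible. *)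

From HB Require Import structures.
From mathcomp Require Import all_boot all_order all_algebra.
From mathcomp Require Import all_classical all_reals all_analysis.
From mathcomp Require Import complex.
Set Implicit Arguments. Unset Strict Implicit. Unset Printing Implicit Defensive.
Import Order.TTheory GRing.Theory Num.Theory.
Import numFieldNormedType.Exports.
Local Open Scope ring_scope.

(* A unital Banach algebra structure on a Banach space A over K:
   an associative, bilinear, unital multiplication with submultiplicative norm
   and ||1|| = 1 (so in particular 1 <> 0).  (The HB joins of mathcomp's ring
   hierarchy with the normed-module hierarchy cannot be declared, so the
   multiplication is carried as an explicit record.) *)
Record banach_alg (K : numFieldType) (A : completeNormedModType K) := BanachAlg {
  bmul : A -> A -> A ;
  bone : A ;
  bmulA : forall a b c, bmul a (bmul b c) = bmul (bmul a b) c ;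
  bmul1l : forall a, bmul bone a = a ;
  bmul1r : forall a, bmul a bone = a ;
  bmulDl : forall a b c, bmul (a + b) c = bmul a c + bmul b c ;
  bmulDr : forall a b c, bmul a (b + c) = bmul a b + bmul a c ;
  bmulZl : forall (k : K) a b, bmul (k *: a) b = k *: bmul a b ;
  bmulZr : forall (k : K) a b, bmul a (k *: b) = k *: bmul a b ;
  bnormM : forall a b, `|bmul a b| <= `|a| * `|b| ;
  bnorm1 : `|bone| = 1
}.

Section Defs.
Variable K : numFieldType.

Definition bounded_linear (U V : normedModType K) (f : U -> V) : Prop :=
  (forall (k : K) (u v : U), f (k *: u + v) = k *: f u + f v) /\
  exists C : K, forall u : U, `|f u| <= C * `|u|.

Definition bounded_bilinear (U V W : normedModType K) (f : U -> V -> W) : Prop :=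
  (forall (k : K) (u u' : U) (v : V), f (k *: u + u') v = k *: f u v + f u' v) /\
  (forall (k : K) (u : U) (v v' : V), f u (k *: v + v') = k *: f u v + f u v') /\
  exists C : K, forall (u : U) (v : V), `|f u v| <= C * `|u| * `|v|.

Definition zero_product_determined (A : completeNormedModType K)
    (mA : banach_alg A) : Prop :=
  forall (X : completeNormedModType K) (V : A -> A -> X),
    bounded_bilinear V ->
    (forall a b : A, bmul mA a b = 0 -> V a b = 0) ->
    exists T : A -> X, bounded_linear T /\
      forall a b : A, V a b = T (bmul mA a b).

Definition invertible (B : completeNormedModType K) (mB : banach_alg B)
    (b : B) : Prop :=
  exists c : B, bmul mB b c = bone mB /\ bmul mB c b = bone mB.

Definition dedekind_finite (B : completeNormedModType K) (mB : banach_alg B) : Prop :=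
  forall a b : B, bmul mB a b = bone mB -> bmul mB b a = bone mB.

Definition two_sided_ideal (A : completeNormedModType K) (mA : banach_alg A)
    (I : set A) : Prop :=
  I 0 /\ (forall a b, I a -> I b -> I (a - b)) /\
  (forall x a, I a -> I (bmul mA x a) /\ I (bmul mA a x)).

End Defs.

From HB Require Import structures.
From mathcomp Require Import all_boot all_order all_algebra.
From mathcomp Require Import all_classical all_reals all_analysis.
From mathcomp Require Import complex.

Import Order.TTheory GRing.Theory Num.Theory.
Import numFieldNormedType.Exports.
Local Open Scope ring_scope.
Local Open Scope classical_set_scope.

Set Implicit Arguments. Unset Strict Implicit.

(* Since A is zero product determined, the bilinear map (a, b) |-> phi a psi b
   factors as T (a b).  With a = 1 or b = 1 this gives
   phi a psi 1 = T a = phi 1 psi a, and Dedekind-finiteness of B makes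
   phi 1 and psi 1 invertible.  Hence phi and psi differ by invertible factors
   on either side of T, which yields all three claims. *)

Section BanachAlgebra.
Variables (K : numFieldType) (B : completeNormedModType K) (mB : banach_alg B).
Local Notation "x *B y" := (bmul mB x y) (at level 40, left associativity).

Lemma bmul0l b : 0 *B b = 0.
Proof.
move: (bmulDl mB 0 0 b); rewrite addr0 => /(congr1 (fun z => z - 0 *B b)).
by rewrite addrK subrr.
Qed.

Lemma bmul0r b : b *B 0 = 0.
Proof.
move: (bmulDr mB b 0 0); rewrite addr0 => /(congr1 (fun z => z - b *B 0)).
by rewrite addrK subrr.
Qed.

Lemma invertible_mul x y :
  invertible mB x -> invertible mB y -> invertible mB (x *B y).
Proof.
move=> [x' [xx' x'x]] [y' [yy' y'y]]; exists (y' *B x'); split.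
  by rewrite bmulA -(bmulA _ x) yy' bmul1r.
by rewrite bmulA -(bmulA _ y') x'x bmul1r.
Qed.

Lemma invertible_mul_eq0l x y : invertible mB x -> x *B y = 0 -> y = 0.
Proof. by move=> [x' [_ x'x]] xy0; rewrite -[y](bmul1l mB) -x'x -bmulA xy0 bmul0r. Qed.

Lemma invertible_mul_eq0r x y : invertible mB y -> x *B y = 0 -> x = 0.
Proof. by move=> [y' [yy' _]] xy0; rewrite -[x](bmul1r mB) -yy' bmulA xy0 bmul0l. Qed.

Hypothesis dfB : dedekind_finite mB.

Lemma invertible_mulKl x y : invertible mB (x *B y) -> invertible mB x.
Proof.
move=> [z [xyz _]]; exists (y *B z).
by split; [|apply: dfB]; rewrite bmulA.
Qed.

Lemma invertible_mulKr x y : invertible mB (x *B y) -> invertible mB y.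
Proof.
move=> [z [_ zxy]]; exists (z *B x).
by split; [apply: dfB|]; rewrite -bmulA.
Qed.

End BanachAlgebra.

Section BoundedLinear.
Variables (K : numFieldType) (U V : normedModType K) (f : U -> V).
Hypothesis f_lin : bounded_linear f.

Lemma bounded_linearB x y : f (x - y) = f x - f y.
Proof.
by have := f_lin.1 (-1) y x; rewrite !scaleN1r addrC => ->; rewrite addrC.
Qed.

Lemma bounded_linear0 : f 0 = 0.
Proof. by move: (bounded_linearB 0 0); rewrite !subrr. Qed.

End BoundedLinear.

Section ZeroProductPreserving.
Variables (K : numFieldType) (A B : completeNormedModType K).
Variables (mA : banach_alg A) (mB : banach_alg B) (phi psi : A -> B).
Local Notation "a *A b" := (bmul mA a b) (at level 40, left associativity).
Local Notation "x *B y" := (bmul mB x y) (at level 40, left associativity).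

Hypotheses (phi_lin : bounded_linear phi) (psi_lin : bounded_linear psi).
Hypothesis phi_psi_zero : forall a b, a *A b = 0 -> phi a *B psi b = 0.

Lemma zero_product_factor : zero_product_determined mA ->
  exists T : A -> B, forall a b, phi a *B psi b = T (a *A b).
Proof.
move=> zpd; have [phiL [C1 hC1]] := phi_lin; have [psiL [C2 hC2]] := psi_lin.
have bilin : bounded_bilinear (fun a b => phi a *B psi b).
  split; [|split].
  - by move=> k a a' b; rewrite phiL bmulDl bmulZl.
  - by move=> k a b b'; rewrite psiL bmulDr bmulZr.
  exists (C1 * C2) => a b; apply: le_trans (bnormM _ _ _) _.
  rewrite -mulrA mulrCA -mulrA mulrCA mulrA.
  by apply: ler_pM; rewrite ?normr_ge0 ?hC1 ?hC2.
by have [T [_ hT]] := zpd B _ bilin phi_psi_zero; exists T.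
Qed.

Variable T : A -> B.
Hypothesis phi_psi_T : forall a b, phi a *B psi b = T (a *A b).

Lemma phi_mul_psi1 a : phi a *B psi (bone mA) = T a.
Proof. by rewrite phi_psi_T bmul1r. Qed.

Lemma phi1_mul_psi a : phi (bone mA) *B psi a = T a.
Proof. by rewrite phi_psi_T bmul1l. Qed.

Hypothesis dfB : dedekind_finite mB.

Lemma invertible_phi1_psi1 a b : invertible mB (phi a) -> invertible mB (psi b) ->
  invertible mB (phi (bone mA)) /\ invertible mB (psi (bone mA)).
Proof.
move=> ia ib; have iab := invertible_mul ia ib.
split; [apply: (invertible_mulKl dfB (y := psi (a *A b)))
       |apply: (invertible_mulKr dfB (x := phi (a *A b)))].
  by rewrite phi1_mul_psi -phi_psi_T.
by rewrite phi_mul_psi1 -phi_psi_T.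
Qed.

Hypotheses (phi1_inv : invertible mB (phi (bone mA)))
           (psi1_inv : invertible mB (psi (bone mA))).

Lemma invertible_preserved a : invertible mA a ->
  invertible mB (phi a) /\ invertible mB (psi a).
Proof.
move=> [a' [aa' a'a]]; have iT1 : invertible mB (T (bone mA)).
  by rewrite -phi_mul_psi1; apply: invertible_mul.
split; [apply: (invertible_mulKl dfB (y := psi a'))
       |apply: (invertible_mulKr dfB (x := phi a'))].
  by rewrite phi_psi_T aa'.
by rewrite phi_psi_T a'a.
Qed.

Lemma kernel_phi_psi a : phi a = 0 <-> psi a = 0.
Proof.
split=> ha.
  by apply: (invertible_mul_eq0l phi1_inv); rewrite phi1_mul_psi -phi_mul_psi1 ha (bmul0l mB).
by apply: (invertible_mul_eq0r psi1_inv); rewrite phi_mul_psi1 -phi1_mul_psi ha (bmul0r mB).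
Qed.

Lemma kernel_phi_ideal : two_sided_ideal mA [set a | phi a = 0].
Proof.
split; first exact: bounded_linear0.
split=> [a b /= ha hb|x a /= ha]; first by rewrite bounded_linearB // ha hb subrr.
have hpsi : psi a = 0 by apply/kernel_phi_psi.
split; apply: (invertible_mul_eq0r psi1_inv); rewrite phi_mul_psi1 -phi_psi_T.
  by rewrite hpsi (bmul0r mB).
by rewrite ha (bmul0l mB).
Qed.

(* [phi x = u y v^-1] gives [u psi x = phi x v = u y], where [u = phi 1], [v = psi 1]. *)
Lemma surjective_phi_psi :
  (forall y, exists x, phi x = y) -> forall y, exists x, psi x = y.
Proof.
have [u' [_ u'u]] := phi1_inv; have [v' [_ v'v]] := psi1_inv.
move=> phi_onto y; have [x hx] := phi_onto (phi (bone mA) *B (y *B v')).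
exists x; rewrite -[psi x](bmul1l mB) -u'u -bmulA phi1_mul_psi -phi_mul_psi1 hx.
by rewrite -!bmulA v'v bmul1r bmulA u'u bmul1l.
Qed.

Lemma surjective_psi_phi :
  (forall y, exists x, psi x = y) -> forall y, exists x, phi x = y.
Proof.
have [u' [uu' _]] := phi1_inv; have [v' [vv' _]] := psi1_inv.
move=> psi_onto y; have [x hx] := psi_onto (u' *B (y *B psi (bone mA))).
exists x; rewrite -[phi x](bmul1r mB) -vv' bmulA phi_mul_psi1 -phi1_mul_psi hx.
by rewrite !bmulA uu' bmul1l -bmulA vv' bmul1r.
Qed.

End ZeroProductPreserving.

Theorem mainTheorem14 (R : realType)
  (A B : completeNormedModType (complex R : numFieldType))
  (mA : banach_alg A) (mB : banach_alg B)
  (phi psi : A -> B) :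
  zero_product_determined mA ->
  dedekind_finite mB ->
  bounded_linear phi -> bounded_linear psi ->
  (forall a b : A, bmul mA a b = 0 -> bmul mB (phi a) (psi b) = 0) ->
  (exists a : A, invertible mB (phi a)) ->
  (exists a : A, invertible mB (psi a)) ->
  [/\ (forall a : A, invertible mA a ->
          invertible mB (phi a) /\ invertible mB (psi a)),
      (forall a : A, phi a = 0 <-> psi a = 0)
        /\ two_sided_ideal mA [set a : A | phi a = 0]
    & ((forall y : B, exists x : A, phi x = y) <->
       (forall y : B, exists x : A, psi x = y))].
Proof.
move=> zpd dfB phi_lin psi_lin phi_psi_zero [a ia] [b ib].
have [T phi_psi_T] := zero_product_factor phi_lin psi_lin phi_psi_zero zpd.
have [iu iv] := invertible_phi1_psi1 phi_psi_T dfB ia ib.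
split.
- exact: invertible_preserved.
- by split=> [a'|]; [exact: kernel_phi_psi | exact: kernel_phi_ideal].
- by split; [exact: surjective_phi_psi | exact: surjective_psi_phi].
Qed.
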